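(* Let $n\ge3$ and order the letters $y_1<y_2<\cdots<y_n$. The rewriting system on words in $y_1,\dots,y_n$ with rules $y_iy_j\to y_jy_i$ for $j+2\le i\le n-1$ and $y_ny_k\to y_ky_n$ for $1\le k\le n-3$ (i.e. the presentation of $K^{\infty}_n$ with each relation oriented towards the length-lexicographically smaller side) is complete: every ambiguity is resolvable, so every element of $K^{\infty}_n$ has a unique irreducible representative word.
   Context: $K^{\infty}_n=\langle y_1,\dots,y_n\mid y_iy_j=y_jy_i\ (j+2\le i\le n-1),\ y_ny_k=y_ky_n\ (1\le k\le n-3)\rangle$. A presentation/rewriting system is complete if it is terminating and all (overlap) ambiguities can be resolved to a common word. *)

(* Words over the alphabet y_1 < ... < y_n are encoded as
   sequences of natural numbers, the letter y_i being the number i. *)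
From mathcomp Require Import all_boot.
From Stdlib Require Import Relations.

Set Implicit Arguments.
Unset Strict Implicit.
Unset Printing Implicit Defensive.

Definition is_word (n : nat) (w : seq nat) : bool :=
  all (fun a => (1 <= a) && (a <= n)) w.

Definition Krule (n : nat) (l r : seq nat) : Prop :=
  (exists i j, [/\ 1 <= j, j + 2 <= i, i <= n - 1,
                   l = [:: i; j] & r = [:: j; i]])
  \/ (exists k, [/\ 1 <= k, k <= n - 3, l = [:: n; k] & r = [:: k; n]]).

Definition Kstep (n : nat) (u v : seq nat) : Prop :=
  exists x y l r, [/\ Krule n l r, u = x ++ l ++ y & v = x ++ r ++ y].

Definition Kstar (n : nat) : relation (seq nat) := clos_refl_trans _ (Kstep n).

(* equivalence closure: equality in the monoid presented by the relations *)
Definition Kconv (n : nat) : relation (seq nat) :=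
  clos_refl_sym_trans _ (Kstep n).

Definition irreducible (n : nat) (w : seq nat) : Prop := forall v, ~ Kstep n w v.

Definition terminating (n : nat) : Prop :=
  forall w, is_word n w -> Acc (fun v u => Kstep n u v) w.

Definition ambiguities_resolvable (n : nat) : Prop :=
  forall w u v, is_word n w -> Kstep n w u -> Kstep n w v ->
    exists z, Kstar n u z /\ Kstar n v z.

Definition complete (n : nat) : Prop :=
  terminating n /\ ambiguities_resolvable n.

(* Every rule of K^oo_n swaps an adjacent pair [a b] into [b a] with [b < a],
   and the set of pairs (a, b) for which [a b] is a left-hand side is a
   transitive relation on letters.  Hence each swap removes an inversion, so
   rewriting terminates, and the only overlaps are words [a b c] in which
   [a b] and [b c] are both left-hand sides; then so is [a c], and both
   rewritings of [a b c] reach [c b a].  Newman's lemma gives confluence, so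
   every word has exactly one irreducible word in its equivalence class. *)

From Stdlib Require Import Relations Classical Wf_nat Inclusion.
From Stdlib Require Relations_3_facts.
From mathcomp Require Import all_boot zify.

Set Implicit Arguments.
Unset Strict Implicit.
Unset Printing Implicit Defensive.

Section AbstractRewriting.

Variables (T : Type) (R : relation T).

Definition joinable (u v : T) : Prop :=
  exists z, clos_refl_trans _ R u z /\ clos_refl_trans _ R v z.

Lemma Rstar_clos_rt x y : Relations_2.Rstar T R x y <-> clos_refl_trans _ R x y.
Proof.
split.
- elim=> [|{}x y' z hxy _ IH]; first exact: rt_refl.
  exact: rt_trans (rt_step _ _ _ _ hxy) IH.
- move=> hxy; elim: (clos_rt_rt1n _ _ _ _ hxy) => {x y hxy} [x|x y z hxy _ IH].
    exact: Relations_2.Rstar_0.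
  exact: Relations_2.Rstar_n IH.
Qed.

Lemma Acc_noetherian x : Acc (transp _ R) x -> Relations_3.noetherian T R x.
Proof. by elim=> {}x _ IH; constructor. Qed.

Lemma newman :
  (forall x, Acc (transp _ R) x) ->
  (forall w u v, R w u -> R w v -> joinable u v) ->
  forall w u v, clos_refl_trans _ R w u -> clos_refl_trans _ R w v -> joinable u v.
Proof.
move=> term lconf w u v /Rstar_clos_rt hu /Rstar_clos_rt hv.
have lconf' : Relations_3.Locally_confluent T R.
  move=> x y z hy hz.
  have [t [/Rstar_clos_rt hyt /Rstar_clos_rt hzt]] := lconf _ _ _ hy hz.
  by exists t.
have [t [/Rstar_clos_rt hut /Rstar_clos_rt hvt]] :=
  Relations_3_facts.Newman T R (fun x => Acc_noetherian (term x)) lconf' w u v hu hv.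
by exists t.
Qed.

Lemma church_rosser :
  (forall w u v, clos_refl_trans _ R w u -> clos_refl_trans _ R w v -> joinable u v) ->
  forall u v, clos_refl_sym_trans _ R u v -> joinable u v.
Proof.
move=> conf u v.
elim=> {u v} [u v huv | u | u v _ [z [hu hv]]
             | u v w _ [z1 [hu1 hv1]] _ [z2 [hv2 hw2]]].
- by exists v; split; [exact: rt_step | exact: rt_refl].
- by exists u; split; exact: rt_refl.
- by exists z.
- have [z [h1 h2]] := conf _ _ _ hv1 hv2.
  by exists z; split; [exact: rt_trans h1 | exact: rt_trans h2].
Qed.

Lemma clos_rt_irreducible u z :
  (forall v, ~ R u v) -> clos_refl_trans _ R u z -> z = u.
Proof.
move=> irr huz; have {huz} := clos_rt_rt1n _ _ _ _ huz.
case=> // v {}z huv _.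
by case: (irr v).
Qed.

Lemma normal_form_exists w :
  Acc (transp _ R) w -> exists w', clos_refl_trans _ R w w' /\ forall v, ~ R w' v.
Proof.
elim=> {}w _ IH.
have [[v hwv] | irr] := classic (exists v, R w v).
- have [w' [hvw' irr]] := IH _ hwv.
  by exists w'; split=> //; exact: rt_trans (rt_step _ _ _ _ hwv) hvw'.
- by exists w; split; [exact: rt_refl | move=> v hwv; apply: irr; exists v].
Qed.

Theorem unique_normal_forms (P : T -> Prop) :
  (forall x, Acc (transp _ R) x) ->
  (forall w u v, R w u -> R w v -> joinable u v) ->
  (forall u v, R u v -> P u -> P v) ->
  forall w, P w -> exists w',
    [/\ P w', forall v, ~ R w' v, clos_refl_sym_trans _ R w w' &
      forall w'', P w'' -> (forall v, ~ R w'' v) ->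
        clos_refl_sym_trans _ R w w'' -> w'' = w'].
Proof.
move=> term lconf stepP w hw.
have [w' [hww' irr']] := normal_form_exists (term w).
have hw' : P w'.
  by elim: hww' hw => [u v /stepP | u | u v z _ IHuv _ IHvz /IHuv /IHvz].
exists w'; split=> // [|w'' _ irr'' hww'']; first exact: clos_rt_clos_rst.
have conv : clos_refl_sym_trans _ R w' w''.
  exact: rst_trans (rst_sym _ _ _ _ (clos_rt_clos_rst _ _ _ _ hww')) hww''.
have [z [h'z h''z]] := church_rosser (newman term lconf) conv.
by rewrite -(clos_rt_irreducible irr'' h''z) (clos_rt_irreducible irr' h'z).
Qed.

End AbstractRewriting.

Lemma clos_rt_incl (T : Type) (R S : relation T) :
  inclusion _ R S -> inclusion _ (clos_refl_trans _ R) (clos_refl_trans _ S).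
Proof.
move=> hRS x y; elim=> [u v /hRS | u | u v z _ huv _ hvz].
- exact: rt_step.
- exact: rt_refl.
- exact: rt_trans huv hvz.
Qed.

Section AdjacentSwaps.

Variable swappable : nat -> nat -> Prop.

Inductive swap_step : seq nat -> seq nat -> Prop :=
| swap_head a b w : swappable a b -> swap_step [:: a, b & w] [:: b, a & w]
| swap_cons c u v : swap_step u v -> swap_step (c :: u) (c :: v).

Lemma swap_star_cons c u v :
  clos_refl_trans _ swap_step u v -> clos_refl_trans _ swap_step (c :: u) (c :: v).
Proof.
elim=> [{}u {}v huv | {}u | u1 u2 u3 _ h12 _ h23].
- by apply: rt_step; constructor.
- exact: rt_refl.
- exact: rt_trans h12 h23.
Qed.

Lemma swap_step_perm u v : swap_step u v -> perm_eq u v.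
Proof.
elim=> [a b w _ | c {}u {}v _ IH]; last by rewrite perm_cons.
by rewrite (perm_catCA [:: a] [:: b] w).
Qed.

Fixpoint inversions (s : seq nat) : nat :=
  if s is a :: s' then count (fun b => b < a) s' + inversions s' else 0.

Hypothesis swappable_lt : forall a b, swappable a b -> b < a.

Lemma inversions_swap_step u v : swap_step u v -> inversions v < inversions u.
Proof.
elim=> [a b w /swappable_lt hba | c {}u {}v huv IH] /=.
- have hab : (a < b) = false by rewrite ltnNge ltnW.
  by rewrite hba hab /=; lia.
- by rewrite (permP (swap_step_perm huv)) ltn_add2l.
Qed.

Lemma swap_step_Acc w : Acc (transp _ swap_step) w.
Proof.
apply: (wf_incl _ _ _ _ (well_founded_ltof _ inversions)) => v u huv.
by apply/ltP; exact: inversions_swap_step.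
Qed.

Hypothesis swappable_trans :
  forall a b c, swappable a b -> swappable b c -> swappable a c.

Lemma swap_overlap a b c w :
  swappable a b -> swappable b c ->
  joinable swap_step [:: b, a, c & w] [:: a, c, b & w].
Proof.
move=> hab hbc; have hac := swappable_trans hab hbc.
exists [:: c, b, a & w]; split.
- exact: rt_trans (rt_step _ _ _ _ (swap_cons b (swap_head w hac)))
                  (rt_step _ _ _ _ (swap_head _ hbc)).
- exact: rt_trans (rt_step _ _ _ _ (swap_head _ hac))
                  (rt_step _ _ _ _ (swap_cons c (swap_head w hab))).
Qed.

Lemma swap_step_consE c u v :
  swap_step (c :: u) v ->
  (exists b w, [/\ swappable c b, u = b :: w & v = [:: b, c & w]]) \/
  exists2 u', swap_step u u' & v = c :: u'.
Proof. by move=> h; inversion h; subst; [left; exists b, w | right; exists v0]. Qed.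

Lemma swap_head_cons_joinable b c w u :
  swappable c b -> swap_step (b :: w) u ->
  joinable swap_step [:: b, c & w] (c :: u).
Proof.
move=> hcb /swap_step_consE [[d [x [hbd -> ->]]] | [x hwx ->]].
  exact: swap_overlap hcb hbd.
exists [:: b, c & x]; split.
- by do 2 apply: swap_star_cons; exact: rt_step.
- by apply: rt_step; constructor.
Qed.

Lemma swap_step_locally_confluent w u v :
  swap_step w u -> swap_step w v -> joinable swap_step u v.
Proof.
elim: w u v => [|c w IH] u v hu; first by inversion hu.
case/swap_step_consE: hu => [[b [w' [hcb -> ->]]] | [u' hu' ->]].
- case/swap_step_consE => [[b' [w'' [_ [<- <-] ->]]] | [v' hv' ->]].
    by exists [:: b, c & w']; split; exact: rt_refl.
  exact: swap_head_cons_joinable.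
- case/swap_step_consE => [[b [w' [hcb hw ->]]] | [v' hv' ->]].
    rewrite hw in hu'; have [z [h1 h2]] := swap_head_cons_joinable hcb hu'.
    by exists z.
  have [z [h1 h2]] := IH _ _ hu' hv'.
  by exists (c :: z); split; exact: swap_star_cons.
Qed.

End AdjacentSwaps.

Definition Kswappable (n a b : nat) : Prop :=
  (1 <= b /\ b + 2 <= a /\ a <= n - 1) \/ (a = n /\ 1 <= b /\ b <= n - 3).

Lemma Kswappable_lt n a b : Kswappable n a b -> b < a.
Proof. rewrite /Kswappable; lia. Qed.

Lemma Kswappable_trans n a b c :
  Kswappable n a b -> Kswappable n b c -> Kswappable n a c.
Proof. rewrite /Kswappable; lia. Qed.

Lemma Krule_swappable n l r :
  Krule n l r <-> exists a b, [/\ Kswappable n a b, l = [:: a; b] & r = [:: b; a]].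
Proof.
split.
- case=> [[i [j [h1 h2 h3 -> ->]]] | [k [h1 h2 -> ->]]].
  + by exists i, j; split=> //; left; lia.
  + by exists n, k; split=> //; right; lia.
- case=> a [b [[hab | hab] -> ->]].
  + by left; exists a, b; split=> //; lia.
  + by right; exists b; case: hab => -> hb; split=> //; lia.
Qed.

Lemma Kstep_swap_step n u v : Kstep n u v <-> swap_step (Kswappable n) u v.
Proof.
split.
- case=> x [y [l [r [/Krule_swappable [a [b [hab -> ->]]] -> ->]]]].
  by elim: x => [|c x IH] /=; constructor.
- elim=> [a b w hab | c {}u {}v _ [x [y [l [r [hlr -> ->]]]]]].
  + exists [::], w, [:: a; b], [:: b; a]; split=> //.
    by apply/Krule_swappable; exists a, b.
  + by exists (c :: x), y, l, r.
Qed.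

Lemma Kstep_is_word n u v : Kstep n u v -> is_word n u -> is_word n v.
Proof.
by move=> /Kstep_swap_step/swap_step_perm huv; rewrite /is_word (perm_all _ huv).
Qed.

Lemma Kstep_Acc n w : Acc (fun v u => Kstep n u v) w.
Proof.
elim: (swap_step_Acc (@Kswappable_lt n) w) => {}w _ IH.
by constructor=> v /Kstep_swap_step; exact: IH.
Qed.

Lemma Kstep_locally_confluent n w u v :
  Kstep n w u -> Kstep n w v -> joinable (Kstep n) u v.
Proof.
move=> /Kstep_swap_step hu /Kstep_swap_step hv.
have [z [huz hvz]] := swap_step_locally_confluent (@Kswappable_trans n) hu hv.
have incl : inclusion _ (swap_step (Kswappable n)) (Kstep n).
  by move=> x y /Kstep_swap_step.
by exists z; split; exact: clos_rt_incl incl _ _ _.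
Qed.

Unset Implicit Arguments.
(* The argument works for every [n]. *)
Theorem lemma1 (n : nat) (hn : 3 <= n) :
  complete n /\
  (forall w, is_word n w ->
     exists w', [/\ is_word n w', irreducible n w', Kconv n w w' &
       forall w'', is_word n w'' -> irreducible n w'' -> Kconv n w w'' ->
         w'' = w']).
Proof.
have term := Kstep_Acc n.
have lconf := @Kstep_locally_confluent n.
split; first by split=> [w _ | w u v _]; [exact: term | exact: lconf].
exact: unique_normal_forms term lconf (@Kstep_is_word n).
Qed.
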